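(* Let $\mathbf{L}$ be a real symmetric $N\times N$ matrix with $\|\mathbf{L}\|\le \varrho$, with orthonormal eigenvectors $\boldsymbol{\phi}_1,\dots,\boldsymbol{\phi}_N$ and eigenvalues $\lambda_1,\dots,\lambda_N$. Let $\psi\neq 0,\varphi,c\in\mathbb{C}$, let $\mathbf{x}\in\mathbb{C}^N$ be a fixed input, and consider the ARMA$_1$ recursion $$\mathbf{y}_{t+1}=\psi\mathbf{L}\mathbf{y}_t+\varphi\mathbf{x},\qquad \mathbf{z}_{t+1}=\mathbf{y}_{t+1}+c\,\mathbf{x},$$ with arbitrary initial condition $\mathbf{y}_0$. Set $r=-\varphi/\psi$ and $p=1/\psi$. Then the frequency response of this recursion is $$H(\lambda)=c+\frac{r}{\lambda-p},\qquad\text{subject to } |p|>\varrho,$$ that is, when $|p|>\varrho$, $\mathbf{z}_t$ converges, linearly and irrespective of $\mathbf{y}_0$ and of $\mathbf{L}$, to $\sum_{n=1}^N H(\lambda_n)\langle \mathbf{x},\boldsymbol{\phi}_n\rangle\boldsymbol{\phi}_n$.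
   Context: $\mathbf{L}$ is a graph representation matrix (e.g. a possibly shifted Laplacian) of an undirected graph: symmetric and local ($L_{ij}=0$ for $i\neq j$ non-adjacent). All matrices $\mathbf{L}$ considered have eigenvalues in $[\lambda_{\min},\lambda_{\max}]$ and $\varrho=\max\{|\lambda_{\min}|,|\lambda_{\max}|\}$ bounds their spectral norm. The frequency response $H$ of a recursion is the function such that the steady-state output equals $\sum_n H(\lambda_n)\langle\mathbf{x},\boldsymbol{\phi}_n\rangle\boldsymbol{\phi}_n$. Linear convergence means convergence to the limit exponentially fast in $t$. *)

From HB Require Import structures.
From mathcomp Require Import all_boot all_order all_algebra.
From mathcomp Require Import complex.
From mathcomp Require Import reals.
Set Implicit Arguments. Unset Strict Implicit. Unset Printing Implicit Defensive.
Import Order.TTheory GRing.Theory Num.Theory.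
Local Open Scope ring_scope.
Local Open Scope complex_scope.

Definition rnorm2 (R : realType) (N : nat) (v : 'cV[R]_N) : R :=
  \sum_(i < N) v i 0 ^+ 2.

Definition spec_norm_le (R : realType) (N : nat) (L : 'M[R]_N) (rho : R) : Prop :=
  0 <= rho /\ forall v : 'cV[R]_N, rnorm2 (L *m v) <= rho ^+ 2 * rnorm2 v.

Definition cmx (R : realType) (m n : nat) (A : 'M[R]_(m, n)) : 'M[R[i]]_(m, n) :=
  map_mx (fun r : R => r%:C) A.

Fixpoint arma1_y (R : realType) (N : nat) (L : 'M[R]_N) (psi phi : R[i])
    (x y0 : 'cV[R[i]]_N) (t : nat) : 'cV[R[i]]_N :=
  match t with
  | 0 => y0
  | t'.+1 => psi *: (cmx L *m arma1_y L psi phi x y0 t') + phi *: x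
  end.

(* output z_t = y_t + c x  (the paper defines z_{t+1} = y_{t+1} + c x; z_0 is irrelevant
   for convergence) *)
Definition arma1_z (R : realType) (N : nat) (L : 'M[R]_N) (psi phi c : R[i])
    (x y0 : 'cV[R[i]]_N) (t : nat) : 'cV[R[i]]_N :=
  arma1_y L psi phi x y0 t + c *: x.

Definition freq_resp (R : realType) (c r p : R[i]) (lam : R) : R[i] :=
  c + r / (lam%:C - p).

(* inner product <x, v> = sum_i x_i conj(v_i), v real *)
Definition cinner (R : realType) (N : nat) (x : 'cV[R[i]]_N) (v : 'cV[R]_N) : R[i] :=
  \sum_(i < N) x i 0 * (v i 0)%:C.

(* linear convergence of a sequence of complex vectors to a limit (entrywise max norm;
   all norms on C^N are equivalent) *)
Definition lin_conv (R : realType) (N : nat) (z : nat -> 'cV[R[i]]_N) (zs : 'cV[R[i]]_N)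
  : Prop :=
  exists (K q : R), 0 <= K /\ 0 <= q /\ q < 1 /\
    forall (t : nat) (i : 'I_N), `|z t i 0 - zs i 0| <= (K * q ^+ t)%:C.

From HB Require Import structures.
From mathcomp Require Import all_boot all_order all_algebra.
From mathcomp Require Import complex.
From mathcomp Require Import reals.
From mathcomp Require Import ring.
Import Order.TTheory GRing.Theory Num.Theory.
Local Open Scope ring_scope.
Local Open Scope complex_scope.

(** The steady state [ys] is the unique fixed point of [y |-> psi L y + phi x];
    expanding [x] in the eigenbasis, it has coordinates [r / (lam n - p)] times
    those of [x], which is well defined because [|lam n| <= rho < |p|].  The error
    [y_t - ys] is multiplied by [psi L] at each step, and [psi L] contracts the
    Euclidean norm on [C^N] by the factor [|psi| rho = rho / |p| < 1]. *)

Lemma realC_sub_neq0 (R : realType) (a rho : R) (z : R[i]) :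
  `|a| <= rho -> rho%:C < `|z| -> a%:C - z != 0.
Proof.
move=> a_le; rewrite subr_eq0; apply: contraTneq => <-.
by rewrite normc_def /= expr0n addr0 sqrtr_sqr ltcR -leNgt.
Qed.

Lemma mul_lt1_of_lt_normV (R : realType) (a : R[i]) (s rho : R) :
  `|a| = s%:C -> rho%:C < `|a^-1| -> s * rho < 1.
Proof.
move=> a_norm; rewrite normfV a_norm -fmorphV ltcR.
have [->|s_neq0] := eqVneq s 0; first by rewrite mul0r ltr01.
have s_gt0 : 0 < s by rewrite lt0r s_neq0 -lecR -a_norm normr_ge0.
by rewrite -(mulfV s_neq0) (ltr_pM2l s_gt0).
Qed.

Section ComplexVectors.
Context {R : realType} {N : nat}.

Lemma cmx_mul (m n k : nat) (A : 'M[R]_(m, n)) (B : 'M[R]_(n, k)) :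
  cmx (A *m B) = cmx A *m cmx B.
Proof. exact: (map_mxM (real_complex R)). Qed.

Lemma cmxZ (m n : nat) (a : R) (A : 'M[R]_(m, n)) :
  cmx (a *: A) = a%:C *: cmx A.
Proof. by apply/matrixP=> i j; rewrite !mxE rmorphM. Qed.

Lemma rnorm2Z (a : R) (v : 'cV[R]_N) : rnorm2 (a *: v) = a ^+ 2 * rnorm2 v.
Proof. by rewrite /rnorm2 mulr_sumr; apply: eq_bigr => i _; rewrite mxE exprMn. Qed.

Definition cnorm2 (v : 'cV[R[i]]_N) : R :=
  \sum_(i < N) (complex.Re (v i 0) ^+ 2 + complex.Im (v i 0) ^+ 2).

Lemma cnorm2_ge0 (v : 'cV[R[i]]_N) : 0 <= cnorm2 v.
Proof. by apply: sumr_ge0 => i _; rewrite addr_ge0 ?sqr_ge0. Qed.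

Lemma cnorm2Z (a : R[i]) (s : R) (v : 'cV[R[i]]_N) :
  `|a| = s%:C -> cnorm2 (a *: v) = s ^+ 2 * cnorm2 v.
Proof.
rewrite normc_def => /complexI <-; rewrite sqr_sqrtr ?addr_ge0 ?sqr_ge0 //.
rewrite /cnorm2 mulr_sumr; apply: eq_bigr => i _; rewrite !mxE.
by case: a => a1 a2; case: (v i 0) => b1 b2 /=; ring.
Qed.

Lemma normc_entry_le (v : 'cV[R[i]]_N) (i : 'I_N) :
  `|v i 0| <= (Num.sqrt (cnorm2 v))%:C.
Proof.
rewrite normc_def lecR ler_wsqrtr // /cnorm2 (bigD1 i) //= lerDl.
by apply: sumr_ge0 => j _; rewrite addr_ge0 ?sqr_ge0.
Qed.

Lemma cnorm2_mulmx_le (L : 'M[R]_N) (rho : R) (v : 'cV[R[i]]_N) :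
  spec_norm_le L rho -> cnorm2 (cmx L *m v) <= rho ^+ 2 * cnorm2 v.
Proof.
case=> _ normL.
pose re : 'cV[R]_N := \col_i complex.Re (v i 0).
pose im : 'cV[R]_N := \col_i complex.Im (v i 0).
have splitv : v = cmx re + 'i%C *: cmx im.
  by apply/matrixP=> i j; rewrite ord1 !mxE; case: (v i 0) => a b; simpc.
have cnorm2_split (a b : 'cV[R]_N) :
    cnorm2 (cmx a + 'i%C *: cmx b) = rnorm2 a + rnorm2 b.
  by rewrite /cnorm2 /rnorm2 -big_split; apply: eq_bigr => i _; rewrite !mxE; simpc.
rewrite splitv mulmxDr -scalemxAr -!cmx_mul !cnorm2_split mulrDr.
by apply: lerD; apply: normL.
Qed.

Lemma cnorm2_iter_le (f : 'cV[R[i]]_N -> 'cV[R[i]]_N) (k : R) (e : nat -> 'cV[R[i]]_N) :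
  0 <= k -> (forall v, cnorm2 (f v) <= k * cnorm2 v) ->
  (forall t, e t.+1 = f (e t)) ->
  forall t, cnorm2 (e t) <= k ^+ t * cnorm2 (e 0%N).
Proof.
move=> k_ge0 f_le e_step; elim=> [|t IHt]; first by rewrite expr0 mul1r.
by rewrite e_step exprS -mulrA (le_trans (f_le _)) // ler_wpM2l.
Qed.

Lemma lin_conv_geometric (z : nat -> 'cV[R[i]]_N) (zs : 'cV[R[i]]_N) (C q : R) :
  0 <= C -> 0 <= q -> q < 1 ->
  (forall t, cnorm2 (z t - zs) <= (q ^+ 2) ^+ t * C) ->
  lin_conv z zs.
Proof.
move=> C_ge0 q_ge0 q_lt1 z_le; exists (Num.sqrt C), q.
split; first exact: sqrtr_ge0.
do 2!split => //; move=> t i.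
have := normc_entry_le (z t - zs) i; rewrite !mxE => /le_trans; apply.
have Cq_ge0 : 0 <= Num.sqrt C * q ^+ t by rewrite mulr_ge0 ?sqrtr_ge0 ?exprn_ge0.
rewrite lecR -(ger0_norm Cq_ge0) -sqrtr_sqr ler_wsqrtr //.
by rewrite exprMn sqr_sqrtr // mulrC -exprM mulnC exprM.
Qed.

End ComplexVectors.

(* Partial fractions: the pole [p = 1/psi] and residue [r = -phi/psi] make
   [r / (lam - p)] a fixed point of [a |-> psi lam a + phi]. *)
Lemma pole_residue_fixpoint (R : fieldType) (psi phi lam : R) :
  psi != 0 -> lam - psi^-1 != 0 ->
  psi * (lam * (- phi / psi / (lam - psi^-1))) + phi = - phi / psi / (lam - psi^-1).
Proof.
move=> psi_neq0; set d := lam - psi^-1 => d_neq0.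
have -> : lam = d + psi^-1 by rewrite /d subrK.
by field; rewrite d_neq0 psi_neq0.
Qed.

Section Eigenbasis.
Context {R : realType} {N : nat} {phiv : 'I_N -> 'cV[R]_N}.
Hypothesis phiv_orthonormal :
  forall n m, (phiv n)^T *m phiv m = ((n == m)%:R)%:M.

Lemma rnorm2_phiv (n : 'I_N) : rnorm2 (phiv n) = 1.
Proof.
have := congr1 (fun M : 'M[R]_1 => M 0 0) (phiv_orthonormal n n).
rewrite /= !mxE eqxx /= mulr1n => h; rewrite -[RHS]h.
by apply: eq_bigr => k _; rewrite !mxE expr2.
Qed.

Lemma eigenbasis_expansion (x : 'cV[R[i]]_N) :
  x = \sum_(n < N) cinner x (phiv n) *: cmx (phiv n).
Proof.
pose P : 'M[R]_N := \matrix_(i, n) phiv n i 0.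
have P_orth : P^T *m P = 1%:M.
  apply/matrixP=> n m; have := congr1 (fun M : 'M[R]_1 => M 0 0) (phiv_orthonormal n m).
  by rewrite /= !mxE eqxx mulr1n => <-; apply: eq_bigr => k _; rewrite !mxE.
have P_row_orth := mulmx1C P_orth.
apply/matrixP=> i j; rewrite ord1 summxE.
transitivity (\sum_(k < N) x k 0 * ((k == i)%:R)%:C).
  rewrite (bigD1 i) //= big1 ?addr0; first by rewrite eqxx mulr1.
  by move=> k /negPf ->; rewrite mulr0.
symmetry; under eq_bigr => n _ do rewrite !mxE /cinner mulr_suml.
rewrite exchange_big /=; apply: eq_bigr => k _.
have := congr1 (fun M : 'M[R]_N => M k i) P_row_orth.
rewrite /P !mxE => <-; rewrite rmorph_sum mulr_sumr; apply: eq_bigr => n _.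
by rewrite !mxE rmorphM mulrA.
Qed.

Lemma eigenvalue_norm_le {L : 'M[R]_N} {rho : R} {lam : 'I_N -> R} (n : 'I_N) :
  spec_norm_le L rho -> (forall n, L *m phiv n = lam n *: phiv n) ->
  `|lam n| <= rho.
Proof.
move=> [rho_ge0 normL] eigL; have := normL (phiv n).
rewrite eigL rnorm2Z rnorm2_phiv !mulr1 => sqr_le.
by rewrite -sqrtr_sqr -(ger0_norm rho_ge0) -sqrtr_sqr ler_wsqrtr.
Qed.

Lemma cmx_mulmx_eigen_sum {L : 'M[R]_N} {lam : 'I_N -> R} (a : 'I_N -> R[i]) :
  (forall n, L *m phiv n = lam n *: phiv n) ->
  cmx L *m (\sum_(n < N) a n *: cmx (phiv n))
    = \sum_(n < N) ((lam n)%:C * a n) *: cmx (phiv n).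
Proof.
move=> eigL; rewrite mulmx_sumr; apply: eq_bigr => n _.
by rewrite -scalemxAr -cmx_mul eigL cmxZ scalerA mulrC.
Qed.

Lemma scale_eigenbasis_expansion (a : R[i]) (x : 'cV[R[i]]_N) :
  a *: x = \sum_(n < N) (a * cinner x (phiv n)) *: cmx (phiv n).
Proof.
by rewrite {1}(eigenbasis_expansion x) scaler_sumr; apply: eq_bigr => n _; rewrite scalerA.
Qed.

Definition arma1_steady (lam : 'I_N -> R) (psi phi : R[i]) (x : 'cV[R[i]]_N) :=
  \sum_(n < N) (- phi / psi / ((lam n)%:C - psi^-1) * cinner x (phiv n)) *: cmx (phiv n).

Lemma freq_resp_expansion (lam : 'I_N -> R) (psi phi c : R[i]) (x : 'cV[R[i]]_N) :
  \sum_(n < N) (freq_resp c (- phi / psi) psi^-1 (lam n) * cinner x (phiv n)) *: cmx (phiv n)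
    = arma1_steady lam psi phi x + c *: x.
Proof.
rewrite (scale_eigenbasis_expansion c) -big_split; apply: eq_bigr => n _ /=.
by rewrite -scalerDl /freq_resp mulrDl addrC.
Qed.

Lemma arma1_steady_fixpoint (L : 'M[R]_N) (lam : 'I_N -> R) (psi phi : R[i])
    (x : 'cV[R[i]]_N) :
  (forall n, L *m phiv n = lam n *: phiv n) ->
  psi != 0 -> (forall n, (lam n)%:C - psi^-1 != 0) ->
  let ys := arma1_steady lam psi phi x in
  psi *: (cmx L *m ys) + phi *: x = ys.
Proof.
move=> eigL psi_neq0 lam_neq_p /=.
rewrite (cmx_mulmx_eigen_sum _ eigL) (scale_eigenbasis_expansion phi) scaler_sumr.
rewrite -big_split.
apply: eq_bigr => n _ /=; rewrite scalerA -scalerDl; congr (_ *: _).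
rewrite (mulrA (_%:C)) mulrA -mulrDl; congr (_ * _).
exact: pole_residue_fixpoint.
Qed.

End Eigenbasis.

Arguments arma1_steady {R N} phiv lam psi phi x.

Section Arma1.
Context {R : realType} {N : nat} (L : 'M[R]_N) (psi phi : R[i]) (x : 'cV[R[i]]_N).

Lemma arma1_y_sub_fixpoint (ys y0 : 'cV[R[i]]_N) (t : nat) :
  psi *: (cmx L *m ys) + phi *: x = ys ->
  arma1_y L psi phi x y0 t.+1 - ys = psi *: (cmx L *m (arma1_y L psi phi x y0 t - ys)).
Proof.
move=> fix_ys; rewrite /= -{1}fix_ys mulmxBr scalerBr.
by rewrite opprD addrACA subrr addr0.
Qed.

Lemma arma1_err_cnorm2_le (rho s : R) (ys y0 : 'cV[R[i]]_N) (t : nat) :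
  `|psi| = s%:C -> spec_norm_le L rho ->
  psi *: (cmx L *m ys) + phi *: x = ys ->
  cnorm2 (arma1_y L psi phi x y0 t - ys) <= ((s * rho) ^+ 2) ^+ t * cnorm2 (y0 - ys).
Proof.
move=> psi_norm normL fix_ys.
apply: (cnorm2_iter_le (fun v => psi *: (cmx L *m v)) _
  (fun t => arma1_y L psi phi x y0 t - ys)) => [||k]; last exact: arma1_y_sub_fixpoint.
- by rewrite exprMn mulr_ge0 ?sqr_ge0.
- move=> v; rewrite (cnorm2Z _ _ _ psi_norm) exprMn -[_ * _ * cnorm2 v]mulrA.
  by apply: ler_wpM2l; [exact: sqr_ge0 | exact: cnorm2_mulmx_le].
Qed.

End Arma1.

Theorem theorem1 (R : realType) (N : nat) (L : 'M[R]_N) (rho : R)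
    (phiv : 'I_N -> 'cV[R]_N) (lam : 'I_N -> R)
    (psi phi c : R[i]) (x y0 : 'cV[R[i]]_N) :
  L^T = L ->
  spec_norm_le L rho ->
  (forall n, L *m phiv n = lam n *: phiv n) ->
  (forall n m, (phiv n)^T *m phiv m = ((n == m)%:R)%:M) ->
  psi != 0 ->
  let r := - phi / psi in
  let p := psi^-1 in
  rho%:C < `|p| ->
  lin_conv (arma1_z L psi phi c x y0)
    (\sum_(n < N) (freq_resp c r p (lam n) * cinner x (phiv n)) *: cmx (phiv n)).
Proof.
move=> _ normL eigL orth psi_neq0 r p rho_lt_p.
have rho_ge0 : 0 <= rho by case: normL.
pose s := Num.sqrt (complex.Re psi ^+ 2 + complex.Im psi ^+ 2).
have psi_norm : `|psi| = s%:C by rewrite normc_def.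
have lam_neq_p n : (lam n)%:C - p != 0.
  exact: realC_sub_neq0 (eigenvalue_norm_le orth n normL eigL) rho_lt_p.
have fix_ys := arma1_steady_fixpoint orth _ _ _ phi x eigL psi_neq0 lam_neq_p.
rewrite (freq_resp_expansion orth).
pose ys := arma1_steady phiv lam psi phi x.
apply: (lin_conv_geometric _ _ _ (s * rho) (cnorm2_ge0 (y0 - ys))).
- by rewrite mulr_ge0 ?sqrtr_ge0.
- exact: mul_lt1_of_lt_normV psi_norm rho_lt_p.
move=> t; rewrite /arma1_z opprD addrACA subrr addr0.
exact: arma1_err_cnorm2_le psi_norm normL fix_ys.
Qed.
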